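(* Let $r\ge 1$ and $n\ge 3r+6$ be integers. Then $\rho(H_{n,r})\ge \rho(H'_{n,r})$, with equality if and only if $n=3r+6$.
   Context: $\rho$ denotes the spectral radius (largest adjacency eigenvalue). $K_1\vee rK_3$ is the join of a single vertex with $r$ disjoint triangles; let $u$ be its vertex of degree $3r$ (any vertex if $r=1$). In $K_{3,n-3r-3}$ (complete bipartite with parts of sizes $3$ and $n-3r-3$), let $vw$ be an edge where $v$ has degree $n-3r-3$ and $w$ has degree $3$. $H_{n,r}$ is the graph obtained from the disjoint union of $K_1\vee rK_3$ and $K_{3,n-3r-3}$ by identifying $u$ with $v$, and $H'_{n,r}$ is obtained by identifying $u$ with $w$. *)

From HB Require Import structures.
From mathcomp Require Import all_boot all_order all_algebra.
From mathcomp Require Import classical_sets reals.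
Set Implicit Arguments. Unset Strict Implicit. Unset Printing Implicit Defensive.
Import Order.TTheory GRing.Theory Num.Theory.
Local Open Scope ring_scope.

Definition adjmx (R : realType) (n : nat) (e : nat -> nat -> bool) : 'M[R]_n :=
  \matrix_(i < n, j < n) (e i j)%:R.

(* Spectral radius = largest (real) adjacency eigenvalue; for a real
   symmetric matrix all eigenvalues are real, so this is the maximum of
   the finite set of real eigenvalues. *)
Definition spec_rad (R : realType) (n : nat) (A : 'M[R]_n) : R :=
  sup [set a : R | eigenvalue A a].

(* Vertex labelling (vertices 0..n-1):
   vertex 0 = the identified vertex u;
   triangle k (k < r) = {3k+1, 3k+2, 3k+3};
   remaining vertices 3r+1 .. n-1 belong to K_{3,n-3r-3}. *)
Definition edge_K1rK3 (r i j : nat) : bool :=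
  (i != j) &&
  [|| (i == 0) && (1 <= j <= 3 * r),
      (j == 0) && (1 <= i <= 3 * r)
    | [&& 1 <= i <= 3 * r, 1 <= j <= 3 * r & (i.-1 %/ 3 == j.-1 %/ 3)]]%N.

Definition edge_bip (A B : pred nat) (i j : nat) : bool :=
  (A i && B j) || (A j && B i).

(* H_{n,r}: u identified with v (a vertex of the 3-side, degree n-3r-3). *)
Definition H_A (r : nat) : pred nat := fun i => [|| i == 0, i == 3 * r + 1 | i == 3 * r + 2]%N.
Definition H_B (r : nat) : pred nat := fun i => (3 * r + 3 <= i)%N.
Definition edgeH (r i j : nat) : bool := edge_K1rK3 r i j || edge_bip (H_A r) (H_B r) i j.

(* H'_{n,r}: u identified with w (a vertex of the big side, degree 3). *)
Definition H'_A (r : nat) : pred nat :=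
  fun i => [|| i == 3 * r + 1, i == 3 * r + 2 | i == 3 * r + 3]%N.
Definition H'_B (r : nat) : pred nat := fun i => (i == 0) || (3 * r + 4 <= i)%N.
Definition edgeH' (r i j : nat) : bool := edge_K1rK3 r i j || edge_bip (H'_A r) (H'_B r) i j.

Definition H_mx (R : realType) (n r : nat) : 'M[R]_n := adjmx R n (edgeH r).
Definition H'_mx (R : realType) (n r : nat) : 'M[R]_n := adjmx R n (edgeH' r).

From HB Require Import structures.
From mathcomp Require Import all_boot all_order all_algebra.
From mathcomp Require Import classical_sets reals.
From mathcomp Require Import zify ring lra.
Import Order.TTheory GRing.Theory Num.Theory.
Set Implicit Arguments. Unset Strict Implicit.
Local Open Scope ring_scope.

(* Let m = n - 3r - 3. In both graphs, the partition into the identified vertex 0,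
   the triangle vertices and the remaining vertices of the two sides of K_{3,m} is
   equitable, so a vector constant on the classes is an eigenvector as soon as its
   four values solve the quotient equations. These reduce to a quartic; a root
   above 2 yields a positive eigenvector, whose eigenvalue is then the spectral
   radius. Transplanting the Perron vector of H'_{n,r} (eigenvalue u) to the
   classes of H_{n,r} gives a positive z with H z >= u z, strictly on the m-side
   when m > 3, and pairing with the Perron vector x of H_{n,r} gives
   (rho(H) - u) <x, z> = <x, H z - u z>. When m = 3 the two quartics coincide. *)

Section PositiveEigenvector.
Variables (R : realType) (n : nat) (A : 'M[R]_n).
Hypothesis A_sym : forall i j, A i j = A j i.

Lemma sum_pos_mul_gt0 (i0 : 'I_n) {x z : 'I_n -> R} :
  (forall i, 0 < x i) -> (forall i, 0 < z i) -> 0 < \sum_i x i * z i.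
Proof.
move=> x_gt0 z_gt0; rewrite (bigD1 i0) //= ltr_pwDl ?mulr_gt0 //.
by apply: sumr_ge0 => i _; rewrite mulr_ge0 ?ltW.
Qed.

Lemma eigenvector_pairing (x z : 'I_n -> R) lam mu :
  (forall i, \sum_j A i j * x j = lam * x i) ->
  (lam - mu) * \sum_i x i * z i = \sum_i x i * (\sum_j A i j * z j - mu * z i).
Proof.
move=> x_eig.
have pair_Az : \sum_i x i * (\sum_j A i j * z j) = lam * \sum_i x i * z i.
  under eq_bigr do rewrite mulr_sumr.
  rewrite exchange_big /= mulr_sumr; apply: eq_bigr => j _.
  under eq_bigr => i _ do rewrite (A_sym i j) mulrA [x i * _]mulrC.
  by rewrite -mulr_suml x_eig mulrA.
under [RHS]eq_bigr do rewrite mulrBr mulrCA.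
by rewrite sumrB -mulr_sumr pair_Az mulrBl.
Qed.

Lemma subeigenvalue_lt (x z : 'I_n -> R) lam mu (k : 'I_n) :
  (forall i, 0 < x i) -> (forall i, 0 < z i) ->
  (forall i, \sum_j A i j * x j = lam * x i) ->
  (forall i, mu * z i <= \sum_j A i j * z j) ->
  mu * z k < \sum_j A k j * z j -> mu < lam.
Proof.
move=> x_gt0 z_gt0 x_eig z_sub z_strict.
have : 0 < (lam - mu) * \sum_i x i * z i.
  rewrite (eigenvector_pairing z mu x_eig) (bigD1 k) //= ltr_pwDl ?mulr_gt0 ?subr_gt0 //.
  by apply: sumr_ge0 => i _; apply: mulr_ge0; [exact: ltW | rewrite subr_ge0].
by rewrite pmulr_lgt0 ?subr_gt0 // (sum_pos_mul_gt0 k x_gt0 z_gt0).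
Qed.

Hypothesis A_ge0 : forall i j, 0 <= A i j.

(* Collatz-Wielandt: compare an eigenvector v with y at the index maximising |v_j| / y_j. *)
Lemma eigenvalue_le_pos_eigenvector (y : 'I_n -> R) c a :
  (forall i, 0 < y i) -> (forall i, \sum_j A i j * y j = c * y i) ->
  eigenvalue A a -> a <= c.
Proof.
move=> y_gt0 y_eig /eigenvalueP [v v_eig v_neq0].
have av : forall j, a * v 0 j = \sum_i A j i * v 0 i.
  move=> j; move/rowP: v_eig => /(_ j); rewrite !mxE => <-.
  by apply: eq_bigr => i _; rewrite A_sym mulrC.
have [j0 vj0] : exists j, v 0 j != 0.
  apply/existsP; apply: contraNT v_neq0; rewrite negb_exists => /forallP v0.
  by apply/eqP/rowP => j; rewrite mxE; apply/eqP/negbNE.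
pose f j := `|v 0 j| / y j.
have [j _ f_max] := @arg_maxP _ R _ j0 xpredT f erefl.
set t := f j in f_max.
have t_gt0 : 0 < t by apply: lt_le_trans (f_max j0 erefl); rewrite divr_gt0 ?normr_gt0.
have v_le : forall k, `|v 0 k| <= t * y k.
  by move=> k; have := f_max k erefl; rewrite /f /= ler_pdivrMr.
have vj : `|v 0 j| = t * y j by rewrite /t /f divfK ?gt_eqF.
have : `|a| * `|v 0 j| <= c * `|v 0 j|.
  rewrite -normrM av; apply: le_trans (ler_norm_sum _ _ _) _.
  apply: le_trans (_ : \sum_i A j i * (t * y i) <= _).
    by apply: ler_sum => i _; rewrite normrM ger0_norm ?ler_wpM2l ?v_le.
  under eq_bigr do rewrite mulrCA.
  by rewrite -mulr_sumr y_eig vj mulrCA.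
rewrite ler_pM2r; last by rewrite vj mulr_gt0.
by move=> a_le; apply: le_trans a_le; exact: ler_norm.
Qed.

Lemma spec_rad_pos_eigenvector (x : 'I_n -> R) lam (i0 : 'I_n) :
  (forall i, 0 < x i) -> (forall i, \sum_j A i j * x j = lam * x i) ->
  spec_rad A = lam.
Proof.
move=> x_gt0 x_eig.
have lam_eig : eigenvalue A lam.
  apply/eigenvalueP; exists (\row_j x j).
    apply/rowP => j; rewrite !mxE -x_eig.
    by apply: eq_bigr => i _; rewrite !mxE A_sym mulrC.
  by apply/eqP => /rowP /(_ i0); rewrite !mxE; apply/eqP/lt0r_neq0.
apply/eqP; rewrite eq_le; apply/andP; split.
  by apply: ge_sup; [exists lam | move=> a; apply: eigenvalue_le_pos_eigenvector x_gt0 x_eig].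
by apply: ub_le_sup lam_eig; exists lam => a; apply: eigenvalue_le_pos_eigenvector x_gt0 x_eig.
Qed.

End PositiveEigenvector.

(* With b = x^2 - c on the triangles and a = (x - 2) b at vertex 0, every quotient
   equation but the one at vertex 0 holds; that one is [quartic t c K x = 0]. *)
Definition quartic (R : realType) (t c K x : R) : R :=
  x * (x - 2) * (x ^+ 2 - c) - 3 * t * (x ^+ 2 - c) - K * x * (x - 2).

(* The quartic is negative at sqrt c and nonnegative at 3t + c + 2K + 3. *)
Lemma quartic_root_gt (R : realType) (t c K : R) : 4 < c -> 0 < K -> 0 <= t ->
  exists l, [/\ 2 < l, c < l ^+ 2 & quartic t c K l = 0].
Proof.
move=> c_gt4 K_gt0 t_ge0.
pose p : {poly R} := 'X * ('X - 2%:P) * ('X^2 - c%:P) - (3 * t)%:P * ('X^2 - c%:P)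
   - K%:P * 'X * ('X - 2%:P).
have pE x : p.[x] = quartic t c K x by rewrite /p !hornerE.
set a := Num.sqrt c; set b := 3 * t + c + 2 * K + 3.
have a2 : a ^+ 2 = c by rewrite sqr_sqrtr //; lra.
have a_ge0 : 0 <= a := sqrtr_ge0 c.
have a_gt2 : 2 < a by nra.
have pa : p.[a] < 0.
  have : 0 < K * a * (a - 2) by rewrite !mulr_gt0 //; lra.
  by rewrite pE /quartic a2 subrr !mulr0; lra.
have pb : 0 <= p.[b].
  have b2c : 2 * K <= b ^+ 2 - c by rewrite /b; nra.
  have bb2 : 6 * t <= b * (b - 2) by rewrite /b; nra.
  rewrite pE /quartic.
  have -> : b * (b - 2) * (b ^+ 2 - c) - 3 * t * (b ^+ 2 - c) - K * b * (b - 2)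
     = (b ^+ 2 - c) * (b * (b - 2) - 3 * t) - K * (b * (b - 2)) by ring.
  have : 2 * K * (b * (b - 2) - 3 * t) <= (b ^+ 2 - c) * (b * (b - 2) - 3 * t).
    by apply: ler_wpM2r => //; lra.
  nra.
have ab : a <= b by rewrite /b; nra.
have pab : p.[a] <= 0 <= p.[b] by rewrite (ltW pa) pb.
have [x /andP [ax _] /eqP px] := poly_ivt ab pab.
have a_lt_x : a < x by rewrite lt_neqAle ax andbT; apply: contraTneq pa => ->; rewrite px ltxx.
by exists x; split; [lra | nra | rewrite -pE].
Qed.

Ltac decide_edge :=
  rewrite /edgeH /edgeH' /edge_K1rK3 /edge_bip /H_A /H_B /H'_A /H'_B /=;
  apply/idP/idP => //; lia.

Lemma edgeH_sym r i j : edgeH r i j = edgeH r j i.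
Proof. decide_edge. Qed.

Lemma edgeH'_sym r i j : edgeH' r i j = edgeH' r j i.
Proof. decide_edge. Qed.

Section ClassVectors.
Variables (R : realType) (r : nat).

(* With k = 2 (resp. 3) the four classes are those of the equitable partition of
   H_{n,r} (resp. H'_{n,r}). *)
Definition classvec (k : nat) (a b c d : R) (j : nat) : R :=
  if (j == 0)%N then a else if (j <= 3 * r)%N then b
  else if (j <= 3 * r + k)%N then c else d.

Lemma classvec_gt0 k a b c d j :
  0 < a -> 0 < b -> 0 < c -> 0 < d -> 0 < classvec k a b c d j.
Proof. by rewrite /classvec; do 3?case: ifP. Qed.

Lemma mulr_classvec l k a b c d j :
  l * classvec k a b c d j = classvec k (l * a) (l * b) (l * c) (l * d) j.
Proof. by rewrite /classvec; do 3?case: ifP. Qed.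

Lemma ler_classvec k a b c d a' b' c' d' j :
  a <= a' -> b <= b' -> c <= c' -> d <= d' ->
  classvec k a b c d j <= classvec k a' b' c' d' j.
Proof. by rewrite /classvec; do 3?case: ifP. Qed.

Lemma classvec0 k a b c d : classvec k a b c d 0 = a.
Proof. by []. Qed.

Lemma classvec_tri k a b c d j :
  (1 <= j <= 3 * r)%N -> classvec k a b c d j = b.
Proof. by move=> jP; rewrite /classvec; do 3?case: ifP => ?; try lia. Qed.

Lemma classvec_mid k a b c d j :
  (3 * r < j <= 3 * r + k)%N -> classvec k a b c d j = c.
Proof. by move=> jP; rewrite /classvec; do 3?case: ifP => ?; try lia. Qed.

Lemma classvec_out k a b c d j :
  (3 * r + k < j)%N -> classvec k a b c d j = d.
Proof. by move=> jP; rewrite /classvec; do 3?case: ifP => ?; try lia. Qed.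

Lemma sum_classvec (w : nat -> R) n k a b c d : (3 * r + k < n)%N ->
  \sum_(j < n) w j * classvec k a b c d j =
  (\sum_(0 <= j < 1) w j) * a + (\sum_(1 <= j < 3 * r + 1) w j) * b
  + (\sum_(3 * r + 1 <= j < 3 * r + k + 1) w j) * c
  + (\sum_(3 * r + k + 1 <= j < n) w j) * d.
Proof.
move=> kn; rewrite !mulr_suml.
rewrite -(big_mkord xpredT (fun j => w j * classvec k a b c d j)).
rewrite (big_cat_nat (n := 3 * r + k + 1)) /=; [|lia|lia].
rewrite (big_cat_nat (n := 3 * r + 1)) /=; [|lia|lia].
rewrite (big_cat_nat (n := 1)) /=; [|lia|lia].
congr (_ + _ + _ + _); apply: eq_big_nat => j jP; congr (_ * _).
- by have -> : j = 0%N by lia.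
- by apply: classvec_tri; lia.
- by apply: classvec_mid; lia.
- by apply: classvec_out; lia.
Qed.

Lemma sum_indicator_const (e : nat -> bool) p q (bb : bool) :
  (forall j, (p <= j < q)%N -> e j = bb) ->
  \sum_(p <= j < q) (e j)%:R = ((q - p) * bb)%:R :> R.
Proof.
move=> eP; under eq_big_nat => j jP do rewrite eP //.
by rewrite sumr_const_nat -mulrnA mulnC.
Qed.

Lemma sum_triangle_indicator (e : nat -> bool) i : (1 <= i <= 3 * r)%N ->
  (forall j, (1 <= j <= 3 * r)%N -> e j = (i != j) && (i.-1 %/ 3 == j.-1 %/ 3)%N) ->
  \sum_(1 <= j < 3 * r + 1) (e j)%:R = 2 :> R.
Proof.
(* i lies in the triangle {3t + 1, 3t + 2, 3t + 3}. *)
move=> iP eP; have [t tE] : exists t, t = (i.-1 %/ 3)%N by eexists.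
rewrite (big_cat_nat (n := 3 * t + 1)) /=; [|lia|lia].
rewrite (big_cat_nat (n := 3 * t + 4) (m := 3 * t + 1)) /=; [|lia|lia].
rewrite (sum_indicator_const (p := 1) (bb := false)); last first.
  by move=> j jP; rewrite eP; [apply/negbTE; lia | lia].
rewrite (sum_indicator_const (p := 3 * t + 4) (bb := false)); last first.
  by move=> j jP; rewrite eP; [apply/negbTE; lia | lia].
do 3 (rewrite big_ltn; last lia).
rewrite big_geq; last lia.
rewrite !eP; try lia.
rewrite !muln0 !addr0 !add0r -!natrD; apply/eqP; rewrite eqr_nat; apply/eqP; lia.
Qed.

Ltac count_neighbours :=
  repeat first
    [ rewrite (sum_indicator_const (bb := true)); last by move=> ? ?; decide_edge
    | rewrite (sum_indicator_const (bb := false)); last by move=> ? ?; decide_edge ].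

Lemma H_row_sum (n : nat) (i : 'I_n) (a b c d : R) : (3 * r + 2 < n)%N ->
  \sum_j H_mx R n r i j * classvec 2 a b c d j =
  classvec 2 ((3 * r)%:R * b + (n - (3 * r + 3))%:R * d) (a + 2 * b)
    ((n - (3 * r + 3))%:R * d) (a + 2 * c) i.
Proof.
move=> rn; under eq_bigr do rewrite mxE.
rewrite (sum_classvec (fun j => (edgeH r i j)%:R)) // /=.
have tri_size : (3 * r + 1 - 1 = 3 * r)%N by lia.
have mid_size : (3 * r + 2 + 1 - (3 * r + 1) = 2)%N by lia.
have out_size : (n - (3 * r + 2 + 1) = n - (3 * r + 3))%N by lia.
have [-> | [iT | [iM | iO]]] : (i = 0 :> nat \/ 1 <= i <= 3 * r \/
  3 * r < i <= 3 * r + 2 \/ 3 * r + 2 < i)%N by lia.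
- count_neighbours; rewrite !muln0 !muln1 tri_size out_size classvec0; ring.
- rewrite (sum_triangle_indicator (e := edgeH r i) iT); last by move=> ? ?; decide_edge.
  count_neighbours; rewrite !muln0 !muln1 subn0 classvec_tri //; ring.
- count_neighbours; rewrite !muln0 !muln1 out_size classvec_mid //; ring.
- count_neighbours; rewrite !muln0 !muln1 subn0 mid_size classvec_out //; ring.
Qed.

Lemma H'_row_sum (n : nat) (i : 'I_n) (a b c d : R) : (3 * r + 3 < n)%N ->
  \sum_j H'_mx R n r i j * classvec 3 a b c d j =
  classvec 3 ((3 * r)%:R * b + 3 * c) (a + 2 * b)
    (a + (n - (3 * r + 4))%:R * d) (3 * c) i.
Proof.
move=> rn; under eq_bigr do rewrite mxE.
rewrite (sum_classvec (fun j => (edgeH' r i j)%:R)) //=.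
have tri_size : (3 * r + 1 - 1 = 3 * r)%N by lia.
have mid_size : (3 * r + 3 + 1 - (3 * r + 1) = 3)%N by lia.
have out_size : (n - (3 * r + 3 + 1) = n - (3 * r + 4))%N by lia.
have [-> | [iT | [iM | iO]]] : (i = 0 :> nat \/ 1 <= i <= 3 * r \/
  3 * r < i <= 3 * r + 3 \/ 3 * r + 3 < i)%N by lia.
- count_neighbours; rewrite !muln0 !muln1 tri_size mid_size classvec0; ring.
- rewrite (sum_triangle_indicator (e := edgeH' r i) iT); last by move=> ? ?; decide_edge.
  count_neighbours; rewrite !muln0 !muln1 subn0 classvec_tri //; ring.
- count_neighbours; rewrite !muln0 !muln1 subn0 out_size classvec_mid //; ring.
- count_neighbours; rewrite !muln0 !muln1 mid_size classvec_out //; ring.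
Qed.
End ClassVectors.

Section Spectra.
Variables (R : realType) (r n : nat).
Local Notation m := ((n - (3 * r + 3))%:R : R).

Lemma H_sym i j : H_mx R n r i j = H_mx R n r j i.
Proof. by rewrite !mxE edgeH_sym. Qed.

Lemma H'_sym i j : H'_mx R n r i j = H'_mx R n r j i.
Proof. by rewrite !mxE edgeH'_sym. Qed.

Lemma H_ge0 i j : 0 <= H_mx R n r i j.
Proof. by rewrite mxE ler0n. Qed.

Lemma H'_ge0 i j : 0 <= H'_mx R n r i j.
Proof. by rewrite mxE ler0n. Qed.

Definition H_vec (l : R) : nat -> R :=
  classvec r 2 ((l - 2) * (l ^+ 2 - 2 * m)) (l ^+ 2 - 2 * m) (m * (l - 2)) (l * (l - 2)).

Definition H'_vec (u : R) : nat -> R :=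
  classvec r 3 ((u - 2) * (u ^+ 2 - 3 * (m - 1))) (u ^+ 2 - 3 * (m - 1))
    (u * (u - 2)) (3 * (u - 2)).

Lemma H_vec_gt0 l j : (3 * r + 3 < n)%N -> 2 < l -> 2 * m < l ^+ 2 -> 0 < H_vec l j.
Proof.
move=> rn l_gt2 l_gtc; have m_gt0 : 0 < m by rewrite ltr0n; lia.
by apply: classvec_gt0; rewrite ?mulr_gt0 //; lra.
Qed.

Lemma H_vec_eigen l (i : 'I_n) : (3 * r + 2 < n)%N -> quartic r%:R (2 * m) m l = 0 ->
  \sum_j H_mx R n r i j * H_vec l j = l * H_vec l i.
Proof.
rewrite /quartic => rn l_root.
by rewrite /H_vec H_row_sum // mulr_classvec; congr classvec; lra.
Qed.

Lemma spec_rad_H l : (3 * r + 3 < n)%N -> 2 < l -> 2 * m < l ^+ 2 ->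
  quartic r%:R (2 * m) m l = 0 -> spec_rad (H_mx R n r) = l.
Proof.
move=> rn l_gt2 l_gtc l_root; have n_gt0 : (0 < n)%N by lia.
apply: (spec_rad_pos_eigenvector H_sym H_ge0 (x := fun i : 'I_n => H_vec l i)
  (Ordinal n_gt0)).
- by move=> i; apply: H_vec_gt0.
- by move=> i; apply: H_vec_eigen => //; lia.
Qed.

Lemma H'_vec_gt0 u j : 2 < u -> 3 * (m - 1) < u ^+ 2 -> 0 < H'_vec u j.
Proof.
move=> u_gt2 u_gtc.
by apply: classvec_gt0; rewrite ?mulr_gt0 //; lra.
Qed.

Lemma H'_vec_eigen u (i : 'I_n) : (3 * r + 3 < n)%N -> quartic r%:R (3 * (m - 1)) 3 u = 0 ->
  \sum_j H'_mx R n r i j * H'_vec u j = u * H'_vec u i.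
Proof.
rewrite /quartic => rn u_root.
have m_pred : (n - (3 * r + 4))%:R = m - 1 :> R.
  have -> : (n - (3 * r + 3) = n - (3 * r + 4) + 1)%N by lia.
  by rewrite natrD; lra.
by rewrite /H'_vec H'_row_sum // m_pred mulr_classvec; congr classvec; lra.
Qed.

Lemma spec_rad_H' u : (3 * r + 3 < n)%N -> 2 < u -> 3 * (m - 1) < u ^+ 2 ->
  quartic r%:R (3 * (m - 1)) 3 u = 0 -> spec_rad (H'_mx R n r) = u.
Proof.
move=> rn u_gt2 u_gtc u_root; have n_gt0 : (0 < n)%N by lia.
apply: (spec_rad_pos_eigenvector H'_sym H'_ge0 (x := fun i : 'I_n => H'_vec u i)
  (Ordinal n_gt0)).
- by move=> i; apply: H'_vec_gt0.
- by move=> i; apply: H'_vec_eigen.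
Qed.

Lemma H'_root_sqr_gt u : (0 < r)%N -> 2 < u -> 3 * (m - 1) < u ^+ 2 ->
  quartic r%:R (3 * (m - 1)) 3 u = 0 -> 3 * m < u ^+ 2.
Proof.
rewrite /quartic => r_gt0 u_gt2 u_gtc u_root.
have : 0 < u * (u - 2) * (u ^+ 2 - 3 * m).
  have -> : u * (u - 2) * (u ^+ 2 - 3 * m) = 3 * r%:R * (u ^+ 2 - 3 * (m - 1)) by lra.
  by rewrite !mulr_gt0 ?ltr0n //; lra.
by rewrite pmulr_rgt0 ?subr_gt0 // mulr_gt0 //; lra.
Qed.

(* The Perron vector of H'_{n,r} transplanted to the classes of H_{n,r}, with
   the two sides of K_{3,m} exchanged and reweighted. *)
Definition H'_vec_on_H (u : R) : nat -> R :=
  classvec r 2 (m * ((u - 2) * (u ^+ 2 - 3 * (m - 1)))) (m * (u ^+ 2 - 3 * (m - 1)))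
    (m * (3 * (u - 2))) (3 * (u * (u - 2))).

Lemma H'_vec_on_H_gt0 u j : (3 * r + 3 < n)%N -> 2 < u -> 3 * (m - 1) < u ^+ 2 ->
  0 < H'_vec_on_H u j.
Proof.
move=> rn u_gt2 u_gtc; have m_gt0 : 0 < m by rewrite ltr0n; lia.
by apply: classvec_gt0; rewrite ?mulr_gt0 //; lra.
Qed.

Lemma H'_vec_on_H_sub u (i : 'I_n) : (0 < r)%N -> (3 * r + 6 <= n)%N ->
  2 < u -> 3 * (m - 1) < u ^+ 2 -> quartic r%:R (3 * (m - 1)) 3 u = 0 ->
  u * H'_vec_on_H u i <= \sum_j H_mx R n r i j * H'_vec_on_H u j.
Proof.
move=> r_gt0 rn u_gt2 u_gtc u_root.
have m_ge3 : 3 <= m by rewrite ler_nat; lia.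
have u_sq := H'_root_sqr_gt r_gt0 u_gt2 u_gtc u_root.
have out_gap : 0 <= (u - 2) * (m - 3) * (u ^+ 2 - 3 * m) by rewrite !mulr_ge0 //; lra.
move: u_root; rewrite /quartic => u_root.
rewrite /H'_vec_on_H H_row_sum; last lia.
rewrite mulr_classvec; apply: ler_classvec; nra.
Qed.

Lemma H'_vec_on_H_strict u (k : 'I_n) :
  (0 < r)%N -> (3 * r + 6 < n)%N -> (3 * r + 2 < k)%N -> 2 < u -> 3 * (m - 1) < u ^+ 2 -> quartic r%:R (3 * (m - 1)) 3 u = 0 ->
  u * H'_vec_on_H u k < \sum_j H_mx R n r k j * H'_vec_on_H u j.
Proof.
move=> r_gt0 rn k_out u_gt2 u_gtc u_root.
have m_gt3 : 3 < m by rewrite ltr_nat; lia.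
have u_sq := H'_root_sqr_gt r_gt0 u_gt2 u_gtc u_root.
have out_gap : 0 < (u - 2) * (m - 3) * (u ^+ 2 - 3 * m) by rewrite !mulr_gt0 //; lra.
rewrite /H'_vec_on_H H_row_sum; last lia.
by rewrite !classvec_out //; nra.
Qed.

Lemma spec_rad_H'_leif : (0 < r)%N -> (3 * r + 6 <= n)%N ->
  spec_rad (H'_mx R n r) <= spec_rad (H_mx R n r) ?= iff (n == 3 * r + 6)%N.
Proof.
move=> r_gt0 rn; have rn3 : (3 * r + 3 < n)%N by lia.
have m_ge3 : 3 <= m by rewrite ler_nat; lia.
have [u [u_gt2 u_gtc u_root]] : exists u, [/\ 2 < u, 3 * (m - 1) < u ^+ 2 &
    quartic r%:R (3 * (m - 1)) 3 u = 0] by apply: quartic_root_gt; rewrite ?ler0n //; lra.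
rewrite (spec_rad_H' rn3 u_gt2 u_gtc u_root); apply/leifP.
have [n_eq | n_neq] := eqVneq n (3 * r + 6)%N.
- (* For m = 3 the two quartics coincide, so u is also the spectral radius of H. *)
  have m3 : m = 3 by rewrite n_eq subnDl.
  rewrite (spec_rad_H rn3 u_gt2) ?m3 //; first lra.
  by move: u_root; rewrite m3 /quartic; lra.
- have [l [l_gt2 l_gtc l_root]] : exists l, [/\ 2 < l, 2 * m < l ^+ 2 &
      quartic r%:R (2 * m) m l = 0] by apply: quartic_root_gt; rewrite ?ler0n //; lra.
  rewrite (spec_rad_H rn3 l_gt2 l_gtc l_root).
  apply: (subeigenvalue_lt H_sym (x := fun i : 'I_n => H_vec l i)
    (z := fun i : 'I_n => H'_vec_on_H u i) (k := Ordinal rn3)).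
  + by move=> i; apply: H_vec_gt0.
  + by move=> i; apply: H'_vec_on_H_gt0.
  + by move=> i; apply: H_vec_eigen => //; lia.
  + by move=> i; apply: H'_vec_on_H_sub.
  + by apply: H'_vec_on_H_strict => //=; move/eqP: n_neq; lia.
Qed.
End Spectra.

Theorem lemma4p2 (R : realType) (r n : nat) :
  (1 <= r)%N -> (3 * r + 6 <= n)%N ->
  spec_rad (H'_mx R n r) <= spec_rad (H_mx R n r) /\
  (spec_rad (H_mx R n r) = spec_rad (H'_mx R n r) <-> n = (3 * r + 6)%N).
Proof.
move=> r_gt0 rn; have [le_rho eq_rho] := spec_rad_H'_leif R r_gt0 rn.
split=> //; split=> [rho_eq | /eqP n_eq].
- by apply/eqP; rewrite -eq_rho rho_eq.
- by apply/eqP; rewrite eq_sym eq_rho.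
Qed.
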